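(* The automorphism group $\Gamma(B)$ of the betweenness relation $B$ on $\mathbb Q\times\mathbb Z$ consists exactly of all positive permutations of $\mathbb Q\times\mathbb Z$ that initiate a strictly increasing map of $\mathbb Q$, together with all negative permutations of $\mathbb Q\times\mathbb Z$ that initiate a strictly decreasing map of $\mathbb Q$.
   Context: $\mathbb Q\times\mathbb Z$ denotes the set $\mathbb Q\times\mathbb Z$ with the lexicographic order: $(r,z)<(r',z')$ iff $r<r'$, or $r=r'$ and $z<z'$. $B(a,b,c)\iff(a<b<c)\vee(a>b>c)$ on $\mathbb Q\times\mathbb Z$, and $\Gamma(B)$ is the group of permutations of $\mathbb Q\times\mathbb Z$ preserving $B$. A vertical is a set $\{r\}\times\mathbb Z$. A permutation $g$ is systemic if it maps every vertical onto a vertical; it initiates the permutation $h$ of $\mathbb Q$ with $g(\{a\}\times\mathbb Z)=\{h(a)\}\times\mathbb Z$. A systemic permutation is positive if it preserves the order on each vertical and negative if it reverses the order on each vertical. *)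

From mathcomp Require Import all_boot all_order all_algebra.
Set Implicit Arguments. Unset Strict Implicit. Unset Printing Implicit Defensive.
Import Order.TTheory GRing.Theory Num.Theory.
Local Open Scope ring_scope.

Definition QZ := (rat * int)%type.

Definition ltQZ (p q : QZ) : Prop :=
  (p.1 < q.1) \/ (p.1 = q.1 /\ p.2 < q.2).

Definition B (a b c : QZ) : Prop :=
  (ltQZ a b /\ ltQZ b c) \/ (ltQZ c b /\ ltQZ b a).

Definition preservesB (g : QZ -> QZ) : Prop :=
  forall a b c, B a b c <-> B (g a) (g b) (g c).

Definition vertical (r : rat) (p : QZ) : Prop := p.1 = r.

Definition initiates (g : QZ -> QZ) (h : rat -> rat) : Prop :=
  forall a, (forall p, vertical a p -> vertical (h a) (g p)) /\
            (forall q, vertical (h a) q -> exists p, vertical a p /\ g p = q).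

Definition systemic (g : QZ -> QZ) : Prop :=
  forall a, exists b, (forall p, vertical a p -> vertical b (g p)) /\
            (forall q, vertical b q -> exists p, vertical a p /\ g p = q).

Definition positive (g : QZ -> QZ) : Prop :=
  systemic g /\ forall r (z z' : int), z < z' -> ltQZ (g (r, z)) (g (r, z')).

Definition negative (g : QZ -> QZ) : Prop :=
  systemic g /\ forall r (z z' : int), z < z' -> ltQZ (g (r, z')) (g (r, z)).

From mathcomp Require Import all_boot all_order all_algebra.
From mathcomp Require Import zify.
Set Implicit Arguments. Unset Strict Implicit. Unset Printing Implicit Defensive.
Import Order.TTheory GRing.Theory Num.Theory.
Local Open Scope ring_scope.

(* An automorphism of the betweenness relation either preserves or reverses
   every strict inequality: any two pairs x < y and u < v are linked by a chain
   of triples, and on each triple the images form a monotone chain.  Hence g is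
   an order automorphism or anti-automorphism of the lexicographic order on
   Q x Z.  Such maps send covering pairs to covering pairs, and the covering
   pairs of Q x Z are exactly (r, z) < (r, z + 1); so g commutes with the unit
   vertical shift up to sign, which forces it to map verticals onto verticals
   through a strictly monotone map of Q of the same direction.  Conversely,
   such a systemic map is an order (anti-)automorphism, hence preserves B. *)

Section TotalOrder.
Context {disp : Order.disp_t} {T : orderType disp}.
Local Open Scope order_scope.

Definition between (a b c : T) := (a < b < c) || (c < b < a).

Lemma between_mono (f : T -> T) a b c :
  {mono f : x y / x < y} -> between (f a) (f b) (f c) = between a b c.
Proof. by move=> mf; rewrite /between !mf. Qed.

Lemma between_nmono (f : T -> T) a b c :
  {mono f : y x / x < y >-> y < x} -> between (f a) (f b) (f c) = between a b c.
Proof. by move=> mf; rewrite /between !mf orbC !(andbC (_ < b)). Qed.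

Section BetweennessHomo.
Variable f : T -> T.
Hypothesis f_between : forall a b c, between a b c -> between (f a) (f b) (f c).
Let s x y := f x < f y.

Lemma sign_chain x y z : x < y -> y < z -> s x y = s y z /\ s x y = s x z.
Proof.
move=> xy yz; have : between x y z by rewrite /between xy yz.
move=> /f_between /orP[/andP[h1 h2]|/andP[h1 h2]]; rewrite /s.
- by rewrite h1 h2 (lt_trans h1 h2).
- by rewrite (lt_gtF h1) (lt_gtF h2) (lt_gtF (lt_trans h1 h2)).
Qed.

Lemma sign_left x y z : x < y -> x < z -> s x y = s x z.
Proof.
move=> xy xz; case: (ltgtP y z) => [yz|zy|<-] //.
- exact: (sign_chain xy yz).2.
- exact/esym/(sign_chain xz zy).2.
Qed.

Lemma sign_right x y z : x < z -> y < z -> s x z = s y z.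
Proof.
move=> xz yz; case: (ltgtP x y) => [xy|yx|<-] //.
- by have [-> ->] := sign_chain xy yz.
- by have [<- <-] := sign_chain yx xz.
Qed.

Lemma sign_const x y u v : x < y -> u < v -> s x y = s u v.
Proof.
move=> xy uv; case: (ltgtP x u) => [xu|ux|exu]; last by subst u; exact: sign_left.
- have xv := lt_trans xu uv.
  by rewrite (sign_left xy xv) (sign_right xv uv).
- have uy := lt_trans ux xy.
  by rewrite -(sign_right uy xy) (sign_left uv uy).
Qed.

Lemma between_homo_or_nhomo (a b : T) : a < b -> injective f ->
  {homo f : x y / x < y} \/ {homo f : y x / x < y >-> y < x}.
Proof.
move=> ab injf; have : f a != f b by rewrite (inj_eq injf) lt_eqF.
case/lt_total/orP => [fab|fba]; [left|right] => x y xy.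
- by have := sign_const xy ab; rewrite /s fab.
- have := sign_const xy ab; rewrite /s (lt_gtF fba).
  case: ltgtP => // /injf exy _.
  by rewrite exy ltxx in xy.
Qed.
End BetweennessHomo.

Definition covers (x y : T) := x < y /\ forall w, ~~ (x < w < y).

Lemma covers_mono (f f' : T -> T) x y : cancel f' f ->
  {mono f : u v / u < v} -> covers x y -> covers (f x) (f y).
Proof.
move=> f'K mf [xy no_mid]; split=> [|w]; first by rewrite mf.
by rewrite -[w]f'K !mf; exact: no_mid.
Qed.

Lemma covers_nmono (f f' : T -> T) x y : cancel f' f ->
  {mono f : v u / u < v >-> v < u} -> covers x y -> covers (f y) (f x).
Proof.
move=> f'K mf [xy no_mid]; split=> [|w]; first by rewrite mf.
by rewrite -[w]f'K !mf andbC; exact: no_mid.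
Qed.
End TotalOrder.

Notation lexQZ := (rat *l int)%type.

Lemma ltQZE (p q : QZ) : ltQZ p q <-> (p < q :> lexQZ)%O.
Proof.
case: p q => r z [s w]; rewrite ltEprodlexi /ltQZ /=.
case: (ltgtP r s) => [rs|sr|<-] /=.
- by split=> // _; left.
- by split=> // -[|[esr]] //; rewrite esr ltxx in sr.
- by split=> [[|[]]|]; last right.
Qed.

Lemma B_between (a b c : QZ) : B a b c <-> between (a : lexQZ) b c.
Proof.
rewrite /B /between !ltQZE; split=> [[[-> ->]|[-> ->]]|]; rewrite ?orbT //.
by case/orP=> /andP[? ?]; [left|right].
Qed.

Section LexQZ.
Local Open Scope order_scope.

Lemma preservesBE (g : lexQZ -> lexQZ) :
  preservesB g <-> forall a b c, between (g a) (g b) (g c) = between a b c.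
Proof.
split=> gB a b c.
- by apply/idP/idP => h; apply/B_between; apply/(gB a b c); apply/B_between.
- by split=> /B_between h; apply/B_between; rewrite ?gB // -gB.
Qed.

Definition shift (k : int) (p : QZ) : QZ := (p.1, (p.2 + k)%R).

Lemma shift0 p : shift 0 p = p.
Proof. by case: p => r z; rewrite /shift addr0. Qed.

Lemma shiftD k l p : shift k (shift l p) = shift (l + k)%R p.
Proof. by rewrite /shift addrA. Qed.

Lemma covers_shift1 (p : lexQZ) : covers p (shift 1 p).
Proof.
case: p => r z; split=> [|[s w]]; first by apply/ltQZE; right; split=> //=; lia.
apply/negP => /andP[/ltQZE h1 /ltQZE h2]; move: h1 h2.
rewrite /ltQZ /= => -[rs|[<- zw]] [sr|[esr wz]].
- by have := lt_trans rs sr; rewrite ltxx.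
- by rewrite esr ltxx in rs.
- by rewrite ltxx in sr.
- lia.
Qed.

Lemma covers_eq_shift1 (p q : lexQZ) : covers p q -> q = shift 1 p.
Proof.
case: p q => r z [s w] [/ltQZE + between_pq]; rewrite /ltQZ /shift /=.
case=> [rs|[esr zw]]; last subst s.
- case/negP: (between_pq (r, z + 1)%R); apply/andP; split; apply/ltQZE.
  + by right; split=> //=; lia.
  + by left.
- have [->//|zw'] : w = (z + 1)%R \/ (z + 1 < w)%R by lia.
  case/negP: (between_pq (r, z + 1)%R); apply/andP; split; apply/ltQZE; right; split=> //=; lia.
Qed.

Lemma shift_equivariant (g : lexQZ -> lexQZ) (e : int) :
  (forall p, g (shift 1 p) = shift e (g p)) ->
  forall k p, g (shift k p) = shift (e * k)%R (g p).
Proof.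
move=> g1.
have gn (n : nat) p : g (shift n p) = shift (e * n)%R (g p).
  elim: n p => [|n IHn] p; first by rewrite mulr0 !shift0.
  by rewrite -addn1 PoszD -shiftD g1 IHn shiftD mulrDr mulr1.
case=> n p; first exact: gn.
have {2}-> : p = shift n.+1 (shift (Negz n) p) by rewrite shiftD NegzE addNr shift0.
by rewrite gn shiftD NegzE mulrN subrr shift0.
Qed.

Lemma homo_shift1 (g : lexQZ -> lexQZ) : bijective g ->
  {homo g : p q / p < q} -> forall p, g (shift 1 p) = shift 1 (g p).
Proof.
move=> [g' gK g'K] /le_mono/leW_mono mg p.
exact/covers_eq_shift1/(covers_mono g'K mg)/covers_shift1.
Qed.

Lemma nhomo_shift1 (g : lexQZ -> lexQZ) : bijective g ->
  {homo g : q p / p < q >-> q < p} -> forall p, g (shift 1 p) = shift (-1) (g p).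
Proof.
move=> [g' gK g'K] /le_nmono/leW_nmono mg p.
have -> : g p = shift 1 (g (shift 1 p)).
  exact/covers_eq_shift1/(covers_nmono g'K mg)/covers_shift1.
by rewrite shiftD addrN shift0.
Qed.

Lemma initiates_systemic g h : initiates g h -> systemic g.
Proof. by move=> gh a; exists (h a); exact: gh. Qed.

Lemma initiates_fst g h : initiates g h -> forall r z, (g (r, z)).1 = h r.
Proof. by move=> gh r z; exact: (gh r).1. Qed.

Lemma initiates_inj g h : injective g -> initiates g h -> injective h.
Proof.
move=> ginj gh x y hxy.
have gy : vertical (h x) (g (y, 0%R)) by rewrite /vertical hxy (initiates_fst gh).
by have [p [<- /ginj ->]] := (gh x).2 _ gy.
Qed.

Lemma shift_initiates (g : lexQZ -> lexQZ) (e : int) : (e * e = 1)%R ->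
  (forall k p, g (shift k p) = shift (e * k)%R (g p)) ->
  initiates g (fun r => (g (r, 0%R)).1).
Proof.
move=> ee gk a.
have gv r z : g (r, z) = shift (e * z)%R (g (r, 0%R)) by rewrite -gk /shift add0r.
rewrite /vertical; split=> [[r z] /= ->|[s w] /= ->]; first by rewrite gv.
exists (a, e * (w - (g (a, 0%R)).2))%R; split=> //.
by rewrite gv /shift mulrA ee mul1r addrC subrK.
Qed.

Lemma initiates_homo_fst (g : lexQZ -> lexQZ) h : injective g -> initiates g h ->
  {homo g : p q / p < q} -> {homo h : x y / x < y}.
Proof.
move=> ginj gh mg x y xy; rewrite lt_neqAle (inj_eq (initiates_inj ginj gh)) lt_eqF //=.
have /mg : ((x, 0%R) < (y, 0%R) :> lexQZ) by apply/ltQZE; left.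
by rewrite ltEprodlexi /= !(initiates_fst gh) => /andP[].
Qed.

Lemma initiates_nhomo_fst (g : lexQZ -> lexQZ) h : injective g -> initiates g h ->
  {homo g : q p / p < q >-> q < p} -> {homo h : y x / x < y >-> y < x}.
Proof.
move=> ginj gh mg y x xy; rewrite lt_neqAle (inj_eq (initiates_inj ginj gh)) gt_eqF //=.
have /mg : ((x, 0%R) < (y, 0%R) :> lexQZ) by apply/ltQZE; left.
by rewrite ltEprodlexi /= !(initiates_fst gh) => /andP[].
Qed.

Lemma initiates_homo_lex (g : lexQZ -> lexQZ) h : initiates g h -> {homo h : x y / x < y} ->
  (forall r (z z' : int), (z < z')%R -> ltQZ (g (r, z)) (g (r, z'))) ->
  {homo g : p q / p < q}.
Proof.
move=> gh mh gz [r z] [s w] /ltQZE [rs|[/= <- zw]]; apply/ltQZE; last exact: gz.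
by left; rewrite !(initiates_fst gh); exact: mh.
Qed.

Lemma initiates_nhomo_lex (g : lexQZ -> lexQZ) h : initiates g h ->
  {homo h : y x / x < y >-> y < x} ->
  (forall r (z z' : int), (z < z')%R -> ltQZ (g (r, z')) (g (r, z))) ->
  {homo g : q p / p < q >-> q < p}.
Proof.
move=> gh mh gz [r z] [s w] /ltQZE [rs|[/= <- zw]]; apply/ltQZE; last exact: gz.
by left; rewrite !(initiates_fst gh); exact: mh.
Qed.

End LexQZ.

Theorem mainTheorem11 (g : QZ -> QZ) (hg : bijective g) :
  preservesB g <->
  ((positive g /\ exists h : rat -> rat, initiates g h /\
       (forall x y : rat, x < y -> h x < h y)) \/
   (negative g /\ exists h : rat -> rat, initiates g h /\
       (forall x y : rat, x < y -> h y < h x))).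
Proof.
have ginj := bij_inj hg.
split=> [/preservesBE gB|].
- have lt01 : ((0, 0) < (0, 1) :> lexQZ)%O by apply/ltQZE; right.
  have gB' (a b c : lexQZ) : between a b c -> between (g a : lexQZ) (g b) (g c).
    by rewrite gB.
  have [mg|mg] := between_homo_or_nhomo gB' lt01 ginj.
  + have gh := shift_initiates (mulr1 1) (shift_equivariant (homo_shift1 hg mg)).
    left; split; first split.
    * exact: initiates_systemic gh.
    * by move=> r z z' zz'; apply/ltQZE/mg/ltQZE; right.
    * by eexists; split; [exact: gh|exact: initiates_homo_fst ginj gh mg].
  + have gh := shift_initiates (mulrNN 1 1) (shift_equivariant (nhomo_shift1 hg mg)).
    right; split; first split.
    * exact: initiates_systemic gh.
    * by move=> r z z' zz'; apply/ltQZE/mg/ltQZE; right.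
    * by eexists; split=> [|x y]; [exact: gh|exact: (initiates_nhomo_fst ginj gh mg)].
- case=> [[[_ gz] [h [gh mh]]]|[[_ gz] [h [gh mh]]]]; apply/preservesBE => a b c.
  + exact/between_mono/leW_mono/le_mono/(initiates_homo_lex gh mh gz).
  + exact/between_nmono/leW_nmono/le_nmono/(initiates_nhomo_lex gh (fun y x => mh x y) gz).
Qed.
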